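(* SW-PAV can fail to produce a committee satisfying IW-JR: there exists an approval-based SCV instance in which a committee maximizing the SW-PAV score does not satisfy IW-JR.
   Context: An approval-based sub-committee voting (SCV) instance consists of a set of voters $N=\{1,\ldots,n\}$, a finite set of candidates $C$ partitioned into candidate subsets $C_1,\ldots,C_\ell$, positive integer quotas $k_j\le |C_j|$, and approval ballots $A_i\subseteq C$ for $i\in N$. A committee is a set $W\subseteq C$ with $|W\cap C_j|=k_j$ for every $j$. Let $r(0)=0$ and $r(t)=\sum_{p=1}^t 1/p$ for $t\ge1$. The SW-PAV score of $W$ is $\sum_{i\in N} r(|W\cap A_i|)$. $W$ satisfies Intra-wise JR (IW-JR) if for every $X\subseteq N$ and every $j$, whenever $|X|\ge n/k_j$ and $|(\bigcap_{i\in X}A_i)\cap C_j|\ge 1$, we have $|W\cap C_j\cap \bigcup_{i\in X}A_i|\ge 1$. *)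

From mathcomp Require Import all_boot all_order all_algebra.
Set Implicit Arguments. Unset Strict Implicit. Unset Printing Implicit Defensive.
Import Order.TTheory GRing.Theory Num.Theory.

(* An approval-based SCV instance: voters 'I_n, candidates 'I_m,
   candidate subsets C_j (j : 'I_l) given by the partition map [part],
   quotas [k], and ballots [A]. *)

Section SCV.
Variables (n m l : nat) (part : 'I_m -> 'I_l) (k : 'I_l -> nat)
  (A : 'I_n -> {set 'I_m}).

Definition subC (j : 'I_l) : {set 'I_m} := [set c | part c == j].

Definition valid_quotas : Prop :=
  forall j : 'I_l, (0 < k j)%N /\ (k j <= #|subC j|)%N.

Definition is_committee (W : {set 'I_m}) : Prop :=
  forall j : 'I_l, #|W :&: subC j| = k j.

Definition harm (t : nat) : rat := \sum_(p < t) ((p.+1)%:R)^-1.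

Definition swpav_score (W : {set 'I_m}) : rat :=
  \sum_(i : 'I_n) harm #|W :&: A i|.

Definition IW_JR (W : {set 'I_m}) : Prop :=
  forall (X : {set 'I_n}) (j : 'I_l),
    (n%:R / (k j)%:R <= (#|X|%:R : rat))%R ->
    (1 <= #|[set c | [forall i in X, c \in A i]] :&: subC j|)%N ->
    (1 <= #|W :&: subC j :&: \bigcup_(i in X) A i|)%N.
End SCV.

From mathcomp Require Import all_boot all_order all_algebra.
Set Implicit Arguments. Unset Strict Implicit. Unset Printing Implicit Defensive.
Import Order.TTheory GRing.Theory Num.Theory.

(* Two voters, groups C_1 = {0,1,2} and C_2 = {3,4}, both quotas 2; voter 0
   approves {0,3,4} and voter 1 approves {1,2}.  Every committee has four
   members, split between the two complementary ballots, so its score is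
   r(x) + r(4 - x); by concavity of r this is maximal at x = 2, which
   W = {1,2,3,4} attains.  But W gives voter 0 nobody from C_1, although she
   alone is a group of size n/k_1 = 1 approving the candidate 0 of C_1. *)

Local Open Scope ring_scope.

Lemma harmS (t : nat) : harm t.+1 = harm t + t.+1%:R^-1.
Proof. by rewrite /harm big_ord_recr. Qed.

Lemma harm_shift_le (a b d : nat) :
  (b <= a)%N -> harm (a + d) + harm b <= harm a + harm (b + d).
Proof.
move=> le_ba; elim: d => [|d IHd]; first by rewrite !addn0 addrC.
rewrite !addnS !harmS addrAC addrA lerD // lef_pV2 ?posrE ?ltr0Sn //.
by rewrite ler_nat ltnS leq_add.
Qed.

Lemma harm_add_le_double (a b c : nat) :
  (a + b = c.*2)%N -> harm a + harm b <= harm c *+ 2.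
Proof.
wlog le_ba : a b / (b <= a)%N => [hwlog|].
  case: (leqP b a) => [/hwlog//|/ltnW le_ab].
  by rewrite addnC addrC; apply: hwlog.
move=> sum_ab; have le_bc : (b <= c)%N by rewrite -leq_double -sum_ab -addnn leq_add2r.
have def_a : a = (c + (c - b))%N by rewrite addnBA // addnn -sum_ab addnK.
rewrite def_a; apply: le_trans (harm_shift_le (c - b) le_bc) _.
by rewrite subnKC // mulr2n.
Qed.

Lemma card_committee (m l : nat) (part : 'I_m -> 'I_l) (k : 'I_l -> nat)
    (W : {set 'I_m}) :
  is_committee part k W -> #|W| = (\sum_(j < l) k j)%N.
Proof.
move=> W_committee; rewrite -sum1_card (partition_big part xpredT) //=.
by apply: eq_bigr => j _; rewrite -W_committee sum1dep_card setIdE.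
Qed.

Lemma swpav_score_two_voters (m : nat) (A : 'I_2 -> {set 'I_m}) (W : {set 'I_m}) :
  swpav_score A W = harm #|W :&: A ord0| + harm #|W :&: A ord_max|.
Proof.
rewrite /swpav_score big_ord_recr big_ord1.
by congr (harm #|_ :&: A _| + _); apply: val_inj.
Qed.

Lemma swpav_score_complement_le (m c : nat) (A : 'I_2 -> {set 'I_m})
    (W : {set 'I_m}) :
  A ord_max = ~: A ord0 -> #|W| = c.*2 -> swpav_score A W <= harm c *+ 2.
Proof.
move=> A_compl card_W; rewrite swpav_score_two_voters A_compl.
by apply: harm_add_le_double; rewrite -setDE cardsID.
Qed.

Lemma IW_JR_single_voter (n m l : nat) (part : 'I_m -> 'I_l) (k : 'I_l -> nat)
    (A : 'I_n -> {set 'I_m}) (W : {set 'I_m}) (i : 'I_n) (j : 'I_l) :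
  IW_JR part k A W -> (n <= k j)%N -> A i :&: subC part j != set0 ->
  W :&: subC part j :&: A i != set0.
Proof.
move=> W_JR le_nk /set0Pn[c]; rewrite inE => /andP[cAi cCj].
have := W_JR [set i] j; rewrite big_set1 cards1 !card_gt0; apply.
  have [->|k_gt0] := posnP (k j); first by rewrite invr0 mulr0 ler01.
  by rewrite ler_pdivrMr ?ltr0n // mul1r ler_nat.
apply/set0Pn; exists c; rewrite in_setI cCj andbT inE.
by apply/forall_inP => i'; rewrite inE => /eqP ->.
Qed.

Definition part (c : 'I_5) : 'I_2 := if (c < 3)%N then ord0 else ord_max.

Definition quota (j : 'I_2) : nat := 2.

Definition ballot (i : 'I_2) : {set 'I_5} :=
  if i == ord0 then [set c : 'I_5 | (c == 0 :> nat) || (3 <= c)%N]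
  else [set c : 'I_5 | (0 < c < 3)%N].

Definition winner : {set 'I_5} := [set c : 'I_5 | c != 0 :> nat].

Ltac count_candidates :=
  by rewrite -sum1_card big_mkcond !big_ord_recr big_ord0 /= !inE.

Lemma ballot_compl : ballot ord_max = ~: ballot ord0.
Proof. by apply/setP => -[[|[|[|c]]] ?]; rewrite !inE. Qed.

Lemma quota_valid : valid_quotas part quota.
Proof. by move=> -[[|[|//]] ?]; split => //; count_candidates. Qed.

Lemma winner_committee : is_committee part quota winner.
Proof. by move=> -[[|[|//]] ?]; count_candidates. Qed.

Lemma swpav_score_winner : swpav_score ballot winner = harm 2 *+ 2.
Proof.
rewrite swpav_score_two_voters mulr2n.
by congr (harm _ + harm _); count_candidates.
Qed.

Lemma winner_optimal (W : {set 'I_5}) :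
  is_committee part quota W -> swpav_score ballot W <= swpav_score ballot winner.
Proof.
move=> /card_committee card_W; rewrite swpav_score_winner.
apply: swpav_score_complement_le; first exact: ballot_compl.
by rewrite card_W !big_ord_recr big_ord0.
Qed.

Lemma winner_not_IW_JR : ~ IW_JR part quota ballot winner.
Proof.
have approved : ballot ord0 :&: subC part ord0 != set0.
  by apply/set0Pn; exists ord0; rewrite !inE.
have unrepresented : winner :&: subC part ord0 :&: ballot ord0 = set0.
  by apply/eqP; rewrite -cards_eq0; count_candidates.
by move=> /IW_JR_single_voter/(_ (leqnn 2) approved); rewrite unrepresented eqxx.
Qed.

Theorem mainTheorem12 :
  exists (n m l : nat) (part : 'I_m -> 'I_l) (k : 'I_l -> nat)
         (A : 'I_n -> {set 'I_m}) (W : {set 'I_m}),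
    [/\ (0 < n)%N,
        valid_quotas part k,
        is_committee part k W,
        (forall W' : {set 'I_m}, is_committee part k W' ->
            (swpav_score A W' <= swpav_score A W)%R)
      & ~ IW_JR part k A W].
Proof.
exists 2, 5, 2, part, quota, ballot, winner; split => //.
- exact: quota_valid.
- exact: winner_committee.
- exact: winner_optimal.
- exact: winner_not_IW_JR.
Qed.
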